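(* Let $X, Y \subseteq \omega$. There exists an embedding $\mathcal{K}_1^X \hookrightarrow \mathcal{K}_2^Y$ if and only if $X \le_T Y$.
   Context: A pca is a set with a partial binary application operation containing distinct $\mathrm{s},\mathrm{k}$ with $\mathrm{k}ab\downarrow=a$, $\mathrm{s}ab\downarrow$, $\mathrm{s}abc\simeq(ac)(bc)$. An embedding of pcas is an injective map $f$ with: if $ab$ is defined then $f(a)f(b)$ is defined and equals $f(ab)$. $\mathcal{K}_1^X$ is the pca on $\omega$ with $n\cdot m=\Phi^X_n(m)$, the $n$-th partial $X$-computable function applied to $m$. $\mathcal{K}_2^Y$ (in the coding used here): elements are the total $Y$-computable functions $g:\omega\to\omega$, with $g\cdot h$ the function $n\mapsto\Phi^{g\oplus h}_{g(0)}(n)$ ($\Phi_e$ the $e$-th Turing functional, $(g\oplus h)(2n)=g(n)$, $(g\oplus h)(2n+1)=h(n)$), defined if and only if this function is total. *)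

From HB Require Import structures.
From mathcomp Require Import all_boot.
From Stdlib Require Cantor.

Set Implicit Arguments.
Unset Strict Implicit.
Unset Printing Implicit Defensive.

Definition cpair (x y : nat) : nat := Cantor.to_nat (x, y).
Definition unpair (z : nat) : nat * nat := Cantor.of_nat z.

Inductive prog : Type :=
| PZero
| PSucc
| PId
| POracle
| PFst
| PSnd
| PPair of prog & prog
| PComp of prog & prog
| PRec of prog & prog
| PMu of prog.

Inductive ev (o : nat -> nat) : prog -> nat -> nat -> Prop :=
| evZero x : ev o PZero x 0
| evSucc x : ev o PSucc x x.+1
| evId x : ev o PId x x
| evOracle x : ev o POracle x (o x)
| evFst x : ev o PFst x (unpair x).1
| evSnd x : ev o PSnd x (unpair x).2
| evPair f g x a b : ev o f x a -> ev o g x b -> ev o (PPair f g) x (cpair a b)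
| evComp f g x a b : ev o g x a -> ev o f a b -> ev o (PComp f g) x b
| evRec0 f g x v : ev o f x v -> ev o (PRec f g) (cpair x 0) v
| evRecS f g x n r v :
    ev o (PRec f g) (cpair x n) r -> ev o g (cpair x (cpair n r)) v ->
    ev o (PRec f g) (cpair x n.+1) v
| evMu f x n :
    ev o f (cpair x n) 0 ->
    (forall m, m < n -> exists w, ev o f (cpair x m) w.+1) ->
    ev o (PMu f) x n.

(* Coding of programs, giving an effective enumeration of all programs. *)
Fixpoint prog_enc (p : prog) : GenTree.tree nat :=
  match p with
  | PZero => GenTree.Node 0 [::]
  | PSucc => GenTree.Node 1 [::]
  | PId => GenTree.Node 2 [::]
  | POracle => GenTree.Node 3 [::]
  | PFst => GenTree.Node 4 [::]
  | PSnd => GenTree.Node 5 [::]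
  | PPair f g => GenTree.Node 6 [:: prog_enc f; prog_enc g]
  | PComp f g => GenTree.Node 7 [:: prog_enc f; prog_enc g]
  | PRec f g => GenTree.Node 8 [:: prog_enc f; prog_enc g]
  | PMu f => GenTree.Node 9 [:: prog_enc f]
  end.

Fixpoint prog_dec (t : GenTree.tree nat) : option prog :=
  match t with
  | GenTree.Node 0 [::] => Some PZero
  | GenTree.Node 1 [::] => Some PSucc
  | GenTree.Node 2 [::] => Some PId
  | GenTree.Node 3 [::] => Some POracle
  | GenTree.Node 4 [::] => Some PFst
  | GenTree.Node 5 [::] => Some PSnd
  | GenTree.Node 6 [:: t1; t2] =>
      if (prog_dec t1, prog_dec t2) is (Some f, Some g) then Some (PPair f g) else None
  | GenTree.Node 7 [:: t1; t2] =>
      if (prog_dec t1, prog_dec t2) is (Some f, Some g) then Some (PComp f g) else None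
  | GenTree.Node 8 [:: t1; t2] =>
      if (prog_dec t1, prog_dec t2) is (Some f, Some g) then Some (PRec f g) else None
  | GenTree.Node 9 [:: t1] =>
      if prog_dec t1 is Some f then Some (PMu f) else None
  | _ => None
  end.

Lemma prog_encK : pcancel prog_enc prog_dec.
Proof. by elim=> //= [f -> g ->|f -> g ->|f -> g ->|f ->]. Qed.

HB.instance Definition _ := Countable.copy prog (pcan_type prog_encK).

(* A program that never halts (used for codes that decode to no program). *)
Definition loop_prog : prog := PMu (PComp PSucc PZero).

Definition prog_of (e : nat) : prog :=
  if unpickle e is Some p then p else loop_prog.

Definition Phi (o : nat -> nat) (e m v : nat) : Prop := ev o (prog_of e) m v.

(* Sets X ⊆ ω are boolean predicates; as oracles, their characteristic functions. *)
Definition chi (X : nat -> bool) : nat -> nat := fun n => if X n then 1 else 0.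

Definition turing_le (X Y : nat -> bool) : Prop :=
  exists e, forall n, Phi (chi Y) e n (chi X n).

Definition join (g h : nat -> nat) : nat -> nat :=
  fun m => if odd m then h m./2 else g m./2.

(* K_1^X : application  a . b ≃ Phi^X_a(b);  K1app X a b c  means a.b↓ = c. *)
Definition K1app (X : nat -> bool) (a b c : nat) : Prop := Phi (chi X) a b c.

Definition K2elem (Y : nat -> bool) (g : nat -> nat) : Prop :=
  exists e, forall n, Phi (chi Y) e n (g n).

(* K_2 application:  K2app g h k  means g.h is defined and equals k,
   i.e. for every n, Phi^{g ⊕ h}_{g(0)}(n) converges with value k n. *)
Definition K2app (g h k : nat -> nat) : Prop :=
  forall n, Phi (join g h) (g 0) n (k n).

(* An embedding K_1^X -> K_2^Y: an injective map into the elements of K_2^Y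
   (functions compared extensionally) preserving defined applications. *)
Definition K1_K2_embedding (X Y : nat -> bool) (f : nat -> nat -> nat) : Prop :=
  [/\ forall a, K2elem Y (f a),
      forall a b, (forall n, f a n = f b n) -> a = b &
      forall a b c, K1app X a b c -> K2app (f a) (f b) (f c)].

(* Both directions rest on a universal machine: a stack machine, written as
   a total expression iterated by primitive recursion, runs coded programs
   relative to an oracle, and a minimisation finds its halting time.

   If [X <=_T Y], send [a] to the [Y]-computable function [(u, a, chi X)],
   where [u] indexes a program that, with oracle [g (+) h], decodes [a = g 1]
   and [b = h 1] and simulates [Phi^X_a(b)] reading [X] off [g]; then
   [f a . f b = f (a . b)].

   Conversely, let [f] be an embedding and [k] a point with [f 0 k <> f 1 k].
   In [K_2^Y], [f (j + 1) = f succ . f j] and [f (chi X n) = f oracle . f n];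
   nesting simulations of the indices [f succ 0] and [f oracle 0] computes
   these values from [Y] uniformly in [j] and [n], and comparing
   [f (chi X n) k] with [f 1 k] decides [X n]. *)

From mathcomp Require Import all_boot zify.
From Stdlib Require Cantor.
From Stdlib Require Import Classical.

Set Implicit Arguments.
Unset Strict Implicit.
Unset Printing Implicit Defensive.

Lemma unpair_cpair a b : unpair (cpair a b) = (a, b).
Proof. exact: Cantor.cancel_of_to. Qed.

Lemma cpair_unpair z : cpair (unpair z).1 (unpair z).2 = z.
Proof. by rewrite /cpair /unpair; case: (Cantor.of_nat z) (Cantor.cancel_to_of z). Qed.

Lemma unpair0 : unpair 0 = (0, 0).
Proof. exact: (unpair_cpair 0 0). Qed.

Lemma cpair_inj a b c d : cpair a b = cpair c d -> a = c /\ b = d.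
Proof. by move=> E; have := unpair_cpair a b; rewrite E unpair_cpair => -[-> ->]. Qed.

Lemma leq_cpair_r a b : b <= cpair a b.
Proof. by have := Cantor.to_nat_non_decreasing a b; rewrite /cpair; lia. Qed.

Arguments cpair : simpl never.
Arguments unpair : simpl never.

(** * A first-order language of total expressions over an oracle *)

(* Variables are de Bruijn indices; [Call p F e] is only meaningful when the
   program [p] computes the total function [F] (see [calls_ok]). *)
Inductive expr : Type :=
| Var of nat
| Cst of nat
| Succ of expr
| Pred of expr
| Pair of expr & expr
| Fst of expr
| Snd of expr
| Query of expr
| Let of expr & expr
| IfZ of expr & expr & expr
| Rec of expr & expr & expr
| Call of prog & (nat -> nat) & expr.

Fixpoint prim_rec (b : nat) (s : nat -> nat -> nat) (n : nat) : nat :=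
  if n is k.+1 then s k (prim_rec b s k) else b.

Fixpoint den (o : nat -> nat) (e : expr) (env : seq nat) : nat :=
  match e with
  | Var i => nth 0 env i
  | Cst n => n
  | Succ e => (den o e env).+1
  | Pred e => (den o e env).-1
  | Pair e1 e2 => cpair (den o e1 env) (den o e2 env)
  | Fst e => (unpair (den o e env)).1
  | Snd e => (unpair (den o e env)).2
  | Query e => o (den o e env)
  | Let e1 e2 => den o e2 (den o e1 env :: env)
  | IfZ c a b => if den o c env is 0 then den o a env else den o b env
  | Rec n b s => prim_rec (den o b env) (fun k r => den o s (r :: k :: env)) (den o n env)
  | Call _ F e => F (den o e env)
  end.

Fixpoint calls_ok (o : nat -> nat) (e : expr) : Prop :=
  match e with
  | Var _ | Cst _ => True
  | Succ e | Pred e | Fst e | Snd e | Query e => calls_ok o e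
  | Pair e1 e2 | Let e1 e2 => calls_ok o e1 /\ calls_ok o e2
  | IfZ a b c | Rec a b c => [/\ calls_ok o a, calls_ok o b & calls_ok o c]
  | Call p F e => (forall x, ev o p x (F x)) /\ calls_ok o e
  end.

Fixpoint no_calls (e : expr) : bool :=
  match e with
  | Var _ | Cst _ => true
  | Succ e | Pred e | Fst e | Snd e | Query e => no_calls e
  | Pair a b | Let a b => no_calls a && no_calls b
  | IfZ a b c | Rec a b c => [&& no_calls a, no_calls b & no_calls c]
  | Call _ _ _ => false
  end.

Lemma no_calls_ok o e : no_calls e -> calls_ok o e.
Proof.
elim: e => //= [a IHa b IHb|a IHa b IHb|a IHa b IHb c IHc|a IHa b IHb c IHc];
  by [move=> /andP[/IHa ? /IHb ?] | move=> /and3P[/IHa ? /IHb ? /IHc ?]].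
Qed.

Fixpoint scoped (k : nat) (e : expr) : bool :=
  match e with
  | Var i => i < k
  | Cst _ => true
  | Succ e | Pred e | Fst e | Snd e | Query e | Call _ _ e => scoped k e
  | Pair a b => scoped k a && scoped k b
  | Let a b => scoped k a && scoped k.+1 b
  | IfZ a b c => [&& scoped k a, scoped k b & scoped k c]
  | Rec a b c => [&& scoped k a, scoped k b & scoped k.+2 c]
  end.

Lemma den_scoped o e k env env' : scoped k e ->
  (forall i, i < k -> nth 0 env i = nth 0 env' i) -> den o e env = den o e env'.
Proof.
elim: e k env env' => /=.
- by move=> i k env env' Hi; apply.
- by [].
- by move=> e IH k env env' He H; rewrite (IH k env env').
- by move=> e IH k env env' He H; rewrite (IH k env env').
- by move=> a IHa b IHb k env env' /andP[Ha Hb] H; rewrite (IHa k env env') // (IHb k env env').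
- by move=> e IH k env env' He H; rewrite (IH k env env').
- by move=> e IH k env env' He H; rewrite (IH k env env').
- by move=> e IH k env env' He H; rewrite (IH k env env').
- move=> a IHa b IHb k env env' /andP[Ha Hb] H; rewrite (IHa k env env') //.
  by apply: (IHb k.+1) => // -[|i] //= /H.
- move=> a IHa b IHb c IHc k env env' /and3P[Ha Hb Hc] H.
  by rewrite (IHa k env env') // (IHb k env env') // (IHc k env env').
- move=> a IHa b IHb c IHc k env env' /and3P[Ha Hb Hc] H.
  rewrite (IHa k env env') // (IHb k env env') //; elim: (den o a env') => //= n ->.
  by apply: (IHc k.+2) => // -[|[|i]] //= /H.
- by move=> p F e IH k env env' He H; rewrite (IH k env env').
Qed.

Lemma eq_prim_rec b s s' n : (forall k r, s k r = s' k r) -> prim_rec b s n = prim_rec b s' n.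
Proof. by move=> H; elim: n => //= n ->. Qed.

Lemma prim_rec_iter b (g : nat -> nat) n : prim_rec b (fun _ r => g r) n = iter n g b.
Proof. by elim: n => //= n ->. Qed.

Section DenPrimitive.
Variables (o : nat -> nat) (env : seq nat).

Lemma den_Var i : den o (Var i) env = nth 0 env i. Proof. by []. Qed.
Lemma den_Cst n : den o (Cst n) env = n. Proof. by []. Qed.
Lemma den_Succ e : den o (Succ e) env = (den o e env).+1. Proof. by []. Qed.
Lemma den_Pred e : den o (Pred e) env = (den o e env).-1. Proof. by []. Qed.
Lemma den_Pair a b : den o (Pair a b) env = cpair (den o a env) (den o b env). Proof. by []. Qed.
Lemma den_Fst e : den o (Fst e) env = (unpair (den o e env)).1. Proof. by []. Qed.
Lemma den_Snd e : den o (Snd e) env = (unpair (den o e env)).2. Proof. by []. Qed.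
Lemma den_Query e : den o (Query e) env = o (den o e env). Proof. by []. Qed.
Lemma den_Let a b : den o (Let a b) env = den o b (den o a env :: env). Proof. by []. Qed.
Lemma den_IfZ c a b :
  den o (IfZ c a b) env = if den o c env is 0 then den o a env else den o b env.
Proof. by []. Qed.
Lemma den_Rec n b s :
  den o (Rec n b s) env = prim_rec (den o b env) (fun k r => den o s (r :: k :: env)) (den o n env).
Proof. by []. Qed.

End DenPrimitive.

(** * Compiling expressions to programs *)

Definition env_code (env : seq nat) : nat := foldr cpair 0 env.

Fixpoint drop_prog (i : nat) : prog := if i is j.+1 then PComp (drop_prog j) PSnd else PId.

Fixpoint const_prog (n : nat) : prog :=
  if n is m.+1 then PComp PSucc (const_prog m) else PZero.

Definition pred_prog : prog := PComp (PRec PZero (PComp PFst PSnd)) (PPair PId PId).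

(* Reorders the argument [<x, <k, r>>] of a [PRec] step into the
   environment [r :: k :: x] expected by [Rec]. *)
Definition rec_step_args : prog := PPair (PComp PSnd PSnd) (PPair (PComp PFst PSnd) PFst).

(* [IfZ c a b] becomes a recursion on [c] whose step discards the accumulator. *)
Fixpoint compile (e : expr) : prog :=
  match e with
  | Var i => PComp PFst (drop_prog i)
  | Cst n => const_prog n
  | Succ e => PComp PSucc (compile e)
  | Pred e => PComp pred_prog (compile e)
  | Pair e1 e2 => PPair (compile e1) (compile e2)
  | Fst e => PComp PFst (compile e)
  | Snd e => PComp PSnd (compile e)
  | Query e => PComp POracle (compile e)
  | Let e1 e2 => PComp (compile e2) (PPair (compile e1) PId)
  | IfZ c a b => PComp (PRec (compile a) (PComp (compile b) PFst)) (PPair PId (compile c))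
  | Rec n b s => PComp (PRec (compile b) (PComp (compile s) rec_step_args)) (PPair PId (compile n))
  | Call p _ e => PComp p (compile e)
  end.

Section Compile.
Variable o : nat -> nat.

Lemma ev_fst_cpair a b : ev o PFst (cpair a b) a.
Proof. by have := evFst o (cpair a b); rewrite unpair_cpair. Qed.

Lemma ev_snd_cpair a b : ev o PSnd (cpair a b) b.
Proof. by have := evSnd o (cpair a b); rewrite unpair_cpair. Qed.

Lemma ev_fst0 : ev o PFst 0 0.
Proof. by have := evFst o 0; rewrite unpair0. Qed.

Lemma ev_snd0 : ev o PSnd 0 0.
Proof. by have := evSnd o 0; rewrite unpair0. Qed.

Lemma ev_drop_prog i env : ev o (drop_prog i) (env_code env) (env_code (drop i env)).
Proof.
elim: i env => [|i IH] env /=; first by rewrite drop0; constructor.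
have -> : drop i.+1 env = drop i (behead env) by case: env.
apply: evComp (IH _); case: env => [|a s] /=; [exact: ev_snd0 | exact: ev_snd_cpair].
Qed.

Lemma ev_const_prog n x : ev o (const_prog n) x n.
Proof. elim: n => [|n IH] /=; [constructor | exact: evComp IH (evSucc _ _)]. Qed.

Lemma ev_rec f g x (F : nat -> nat) :
  ev o f x (F 0) -> (forall n, ev o g (cpair x (cpair n (F n))) (F n.+1)) ->
  forall n, ev o (PRec f g) (cpair x n) (F n).
Proof. by move=> H0 HS; elim=> [|n IH]; [exact: evRec0 | exact: evRecS IH (HS n)]. Qed.

Lemma ev_pred_prog x : ev o pred_prog x x.-1.
Proof.
apply: evComp (evPair (evId _ _) (evId _ _)) _.
apply: (@ev_rec _ _ x predn); first exact: evZero.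
by move=> n; apply: evComp (evSnd _ _) _; rewrite unpair_cpair; exact: ev_fst_cpair.
Qed.

Lemma ev_rec_step_args env k r :
  ev o rec_step_args (cpair (env_code env) (cpair k r)) (env_code [:: r, k & env]).
Proof.
apply: evPair; last apply: evPair; last exact: ev_fst_cpair.
- by apply: evComp (ev_snd_cpair _ _) _; exact: ev_snd_cpair.
- by apply: evComp (ev_snd_cpair _ _) _; exact: ev_fst_cpair.
Qed.

Lemma compile_correct e : calls_ok o e ->
  forall env, ev o (compile e) (env_code env) (den o e env).
Proof.
elim: e => /=.
- move=> i _ env; apply: evComp (ev_drop_prog i env) _.
  have -> : nth 0 env i = nth 0 (drop i env) 0 by rewrite nth_drop addn0.
  case: (drop i env) => [|a s] /=; [exact: ev_fst0 | exact: ev_fst_cpair].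
- by move=> n _ env; exact: ev_const_prog.
- by move=> e IH H env; apply: evComp (IH H env) (evSucc _ _).
- by move=> e IH H env; apply: evComp (IH H env) (ev_pred_prog _).
- by move=> e1 IH1 e2 IH2 [H1 H2] env; apply: evPair; [exact: IH1 | exact: IH2].
- by move=> e IH H env; apply: evComp (IH H env) (evFst _ _).
- by move=> e IH H env; apply: evComp (IH H env) (evSnd _ _).
- by move=> e IH H env; apply: evComp (IH H env) (evOracle _ _).
- move=> e1 IH1 e2 IH2 [H1 H2] env.
  exact: evComp (evPair (IH1 H1 env) (evId _ _)) (IH2 H2 (_ :: env)).
- move=> c IHc a IHa b IHb [Hc Ha Hb] env.
  apply: evComp (evPair (evId _ _) (IHc Hc env)) _.
  pose F n := if n is 0 then den o a env else den o b env.
  apply: (@ev_rec _ _ _ F (IHa Ha env)) => n.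
  exact: evComp (ev_fst_cpair _ _) (IHb Hb env).
- move=> n IHn b IHb s IHs [Hn Hb Hs] env.
  apply: evComp (evPair (evId _ _) (IHn Hn env)) _.
  apply: ev_rec; first exact: IHb.
  by move=> k; exact: evComp (ev_rec_step_args _ _ _) (IHs Hs _).
- by move=> p F e IH [Hp H] env; apply: evComp (IH H env) (Hp _).
Qed.

End Compile.

Lemma prog_of_pickle p : prog_of (pickle p) = p.
Proof. by rewrite /prog_of pickleK. Qed.

Definition env1_prog : prog := PPair PId PZero.

Lemma ev_env1_prog o n : ev o env1_prog n (env_code [:: n]).
Proof. exact: evPair (evId _ _) (evZero _ _). Qed.

Section DenDerived.
Variables (o : nat -> nat) (env : seq nat).

Definition Sub a b := Rec b a (Pred (Var 0)).

Lemma den_Sub a b : den o (Sub a b) env = den o a env - den o b env.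
Proof. by rewrite den_Rec; elim: (den o b env) => /= [|n ->]; rewrite ?subn0 ?subnS. Qed.

Definition IfEq a b x y := IfZ (Sub a b) (IfZ (Sub b a) x y) y.

Lemma den_IfEq a b x y :
  den o (IfEq a b x y) env = if den o a env == den o b env then den o x env else den o y env.
Proof.
rewrite !den_IfZ !den_Sub; case: ltngtP => H.
- by rewrite (eqP (ltnW H)); case: (_ - _) (subn_gt0 (den o a env) (den o b env)) => //; lia.
- by case: (_ - _) (subn_gt0 (den o b env) (den o a env)) => //; lia.
- by rewrite H subnn.
Qed.

Definition Dbl a := Rec a (Cst 0) (Succ (Succ (Var 0))).

Lemma den_Dbl a : den o (Dbl a) env = (den o a env).*2.
Proof. by rewrite den_Rec; elim: (den o a env) => //= n ->. Qed.

Definition HalfOdd a := Rec a (Pair (Cst 0) (Cst 0))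
  (IfZ (Snd (Var 0)) (Pair (Fst (Var 0)) (Cst 1)) (Pair (Succ (Fst (Var 0))) (Cst 0))).
Definition Half a := Fst (HalfOdd a).
Definition Odd a := Snd (HalfOdd a).

Lemma den_HalfOdd a : den o (HalfOdd a) env = cpair (den o a env)./2 (odd (den o a env)).
Proof.
rewrite den_Rec; elim: (den o a env) => //= n ->; rewrite !unpair_cpair /=.
by case: (odd n) (uphalf_half n) => /= ->.
Qed.

Lemma den_Half a : den o (Half a) env = (den o a env)./2.
Proof. by rewrite den_Fst den_HalfOdd unpair_cpair. Qed.

Lemma den_Odd a : den o (Odd a) env = odd (den o a env).
Proof. by rewrite den_Snd den_HalfOdd unpair_cpair. Qed.

Fixpoint Case (e : expr) (bs : seq expr) (d : expr) : expr :=
  if bs is b :: bs' then IfZ e b (Case (Pred e) bs' d) else d.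

Lemma den_Case e bs d :
  den o (Case e bs d) env = nth (den o d env) [seq den o b env | b <- bs] (den o e env).
Proof.
elim: bs e => [|b bs IH] e; first by rewrite /= nth_nil.
by rewrite den_IfZ IH den_Pred; case: (den o e env).
Qed.

Definition list_code (l : seq nat) : nat := foldr (fun a r => (cpair a r).+1) 0 l.

Definition Cons a l := Succ (Pair a l).
Definition Hd l := Fst (Pred l).
Definition Tl l := Snd (Pred l).

Lemma den_Cons a l : den o (Cons a l) env = (cpair (den o a env) (den o l env)).+1.
Proof. by []. Qed.
Lemma den_Hd l : den o (Hd l) env = (unpair (den o l env).-1).1. Proof. by []. Qed.
Lemma den_Tl l : den o (Tl l) env = (unpair (den o l env).-1).2. Proof. by []. Qed.

End DenDerived.

Lemma size_list_code s : size s <= list_code s.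
Proof. by elim: s => //= x s IH; have := leq_cpair_r x (list_code s); lia. Qed.

(* [CodeSeq] codes [x :: s] as [2 ^ x * (2 * code s + 1)]; the head is thus
   the 2-adic valuation, found by at most [n] halvings of [n]. *)
Definition val2_step (r : nat) : nat :=
  let: (c, v) := unpair r in if (c == 0) || odd c then r else cpair c./2 v.+1.

Definition val2_iter (n : nat) : nat := iter n val2_step (cpair n 0).
Definition cs_head (n : nat) : nat := (unpair (val2_iter n)).2.
Definition cs_tail (n : nat) : nat := ((unpair (val2_iter n)).1)./2.

Lemma iter_val2_step a b k m : odd m -> a <= k ->
  iter k val2_step (cpair (2 ^ a * m) b) = cpair m (b + a).
Proof.
move=> Hm; have m0 : (m == 0) = false by case: m Hm.
elim: a b k => [|a IH] b k hk.
  rewrite mul1n addn0; elim: k {hk} => //= k ->.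
  by rewrite /val2_step unpair_cpair Hm orbT.
case: k hk => // k hk; rewrite iterSr {2}/val2_step unpair_cpair.
have -> : 2 ^ a.+1 * m = (2 ^ a * m).*2 by rewrite expnS -mulnA mul2n.
by rewrite odd_double double_eq0 muln_eq0 expn_eq0 m0 doubleK IH // addSnnS.
Qed.

Lemma cs_head_tail v m : cs_head (2 ^ v * (2 * m).+1) = v /\ cs_tail (2 ^ v * (2 * m).+1) = m.
Proof.
have hv : v <= 2 ^ v * (2 * m).+1.
  by apply: leq_trans (ltnW (ltn_expl v (isT : 1 < 2))) _; rewrite leq_pmulr.
rewrite /cs_head /cs_tail /val2_iter iter_val2_step ?unpair_cpair //=; last first.
  by rewrite mul2n /= odd_double.
by rewrite mul2n uphalf_double.
Qed.

Lemma decode_cons n : 0 < n ->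
  CodeSeq.decode n = cs_head n :: CodeSeq.decode (cs_tail n) /\ cs_tail n < n.
Proof.
move=> Hn; case E: (CodeSeq.decode n) => [|v s].
  by move: (CodeSeq.decodeK n); rewrite E /= => H; rewrite -H in Hn.
have En : n = 2 ^ v * (2 * CodeSeq.code s).+1 by rewrite -(CodeSeq.decodeK n) E /= -mul2n.
have [Hh Ht] := cs_head_tail v (CodeSeq.code s); rewrite -En in Hh Ht.
rewrite Hh Ht CodeSeq.codeK; split=> //; rewrite {1}En.
by apply: leq_trans (_ : (2 * CodeSeq.code s).+1 <= _); rewrite ?leq_pmull ?expn_gt0 //; lia.
Qed.

Definition Val2Step := IfZ (Fst (Var 0)) (Var 0)
  (IfZ (Odd (Fst (Var 0))) (Pair (Half (Fst (Var 0))) (Succ (Snd (Var 0)))) (Var 0)).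
Definition Val2Iter n := Rec n (Pair n (Cst 0)) Val2Step.
Definition CsHead n := Snd (Val2Iter n).
Definition CsTail n := Half (Fst (Val2Iter n)).

Section DenCodeSeq.
Variables (o : nat -> nat) (env : seq nat).

Lemma den_Val2Iter n : den o (Val2Iter n) env = val2_iter (den o n env).
Proof.
rewrite den_Rec den_Pair den_Cst /val2_iter -prim_rec_iter; apply: eq_prim_rec => k r.
rewrite -[r]cpair_unpair /val2_step unpair_cpair.
case: (unpair r) => c v.
rewrite /Val2Step !den_IfZ den_Odd !den_Pair den_Half den_Succ !den_Fst den_Snd !den_Var /=.
by rewrite unpair_cpair /=; case: c => //= c; case: (odd c).
Qed.

Lemma den_CsHead n : den o (CsHead n) env = cs_head (den o n env).
Proof. by rewrite den_Snd den_Val2Iter. Qed.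

Lemma den_CsTail n : den o (CsTail n) env = cs_tail (den o n env).
Proof. by rewrite den_Half den_Fst den_Val2Iter. Qed.

End DenCodeSeq.

(** * A stack machine running coded programs *)

(* Constructor tags follow [prog_enc], so that [node_pcode] below can read
   them off a decoded tree. *)
Fixpoint pcode (p : prog) : nat :=
  match p with
  | PZero => cpair 0 0 | PSucc => cpair 1 0 | PId => cpair 2 0 | POracle => cpair 3 0
  | PFst => cpair 4 0 | PSnd => cpair 5 0
  | PPair f g => cpair 6 (cpair (pcode f) (pcode g))
  | PComp f g => cpair 7 (cpair (pcode f) (pcode g))
  | PRec f g => cpair 8 (cpair (pcode f) (pcode g))
  | PMu f => cpair 9 (pcode f)
  end.

(* A configuration is [<state, stack>], the stack a [list_code] of frames.
   The tag [t] carried by states and frames tells which oracle the program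
   being run consults. *)
Definition eval_st (t c x : nat) : nat := cpair 0 (cpair t (cpair c x)).
Definition ret_st (v : nat) : nat := cpair 1 v.
Definition push (fr K : nat) : nat := (cpair fr K).+1.

Definition pair1_fr (t g x : nat) : nat := cpair 0 (cpair t (cpair g x)).
Definition pair2_fr (a : nat) : nat := cpair 1 a.
Definition comp_fr (t f : nat) : nat := cpair 2 (cpair t f).
Definition rec_fr (t g x n N : nat) : nat := cpair 3 (cpair t (cpair g (cpair x (cpair n N)))).
Definition mu_fr (t f x n : nat) : nat := cpair 4 (cpair t (cpair f (cpair x n))).

Definition EvalSt T C X := Pair (Cst 0) (Pair T (Pair C X)).
Definition RetSt V := Pair (Cst 1) V.

Lemma den_EvalSt o T C X env :
  den o (EvalSt T C X) env = eval_st (den o T env) (den o C env) (den o X env).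
Proof. by []. Qed.

Lemma den_RetSt o V env : den o (RetSt V) env = ret_st (den o V env).
Proof. by []. Qed.

(* Derived forms come first: [rewrite den_IfZ], say, would unfold an [IfEq]. *)
Ltac den_step := first
  [ rewrite den_CsHead | rewrite den_CsTail | rewrite den_EvalSt | rewrite den_RetSt
  | rewrite den_IfEq | rewrite den_Odd | rewrite den_Half | rewrite den_HalfOdd
  | rewrite den_Sub | rewrite den_Dbl | rewrite den_Hd | rewrite den_Tl | rewrite den_Cons
  | rewrite den_Case | rewrite den_IfZ | rewrite den_Let | rewrite den_Fst | rewrite den_Snd
  | rewrite den_Var | rewrite den_Pair | rewrite den_Cst | rewrite den_Query | rewrite den_Pred
  | rewrite den_Succ | rewrite unpair_cpair
  | progress cbn beta iota delta [fst snd predn nth map] ].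
Ltac den_simp := repeat den_step.

(* [OnQuery] gives the state entered on an oracle query [x] under tag [t];
   it is evaluated in the environment [x :: t :: config]. *)
Definition STEP (OnQuery : expr) : expr :=
 let C := Var 0 in
 let M := Fst C in let K := Snd C in
 IfZ (Fst M)
  (let T := Fst (Snd M) in let Cd := Fst (Snd (Snd M)) in let X := Snd (Snd (Snd M)) in
   let A := Snd Cd in
   Case (Fst Cd)
    [:: Pair (RetSt (Cst 0)) K;
        Pair (RetSt (Succ X)) K;
        Pair (RetSt X) K;
        Pair (Let T (Let (Snd (Snd (Snd (Fst (Var 1))))) OnQuery)) K;
        Pair (RetSt (Fst X)) K;
        Pair (RetSt (Snd X)) K;
        Pair (EvalSt T (Fst A) X) (Cons (Pair (Cst 0) (Pair T (Pair (Snd A) X))) K);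
        Pair (EvalSt T (Snd A) X) (Cons (Pair (Cst 2) (Pair T (Fst A))) K);
        Pair (EvalSt T (Fst A) (Fst X))
             (Cons (Pair (Cst 3) (Pair T (Pair (Snd A) (Pair (Fst X) (Pair (Cst 0) (Snd X)))))) K);
        Pair (EvalSt T A (Pair X (Cst 0))) (Cons (Pair (Cst 4) (Pair T (Pair A (Pair X (Cst 0))))) K)]
    C)
  (let V := Snd M in
   IfZ K C
    (let Fr := Hd K in let K' := Tl K in let D := Snd Fr in
     Case (Fst Fr)
      [:: Pair (EvalSt (Fst D) (Fst (Snd D)) (Snd (Snd D))) (Cons (Pair (Cst 1) V) K');
          Pair (RetSt (Pair D V)) K';
          Pair (EvalSt (Fst D) (Snd D) V) K';
          (let t := Fst D in let g := Fst (Snd D) in let x := Fst (Snd (Snd D)) in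
           let n := Fst (Snd (Snd (Snd D))) in let N := Snd (Snd (Snd (Snd D))) in
           IfEq n N (Pair (RetSt V) K')
                    (Pair (EvalSt t g (Pair x (Pair n V)))
                          (Cons (Pair (Cst 3) (Pair t (Pair g (Pair x (Pair (Succ n) N))))) K')));
          (let t := Fst D in let f := Fst (Snd D) in let x := Fst (Snd (Snd D)) in
           let n := Snd (Snd (Snd D)) in
           IfZ V (Pair (RetSt n) K')
                 (Pair (EvalSt t f (Pair x (Succ n)))
                       (Cons (Pair (Cst 4) (Pair t (Pair f (Pair x (Succ n))))) K')))]
      C)).

Section Step.
Variables (o : nat -> nat) (OnQuery : expr).

Definition mstep (c : nat) : nat := den o (STEP OnQuery) [:: c].

Ltac step_simp := rewrite /mstep /STEP /eval_st /ret_st /push; den_simp.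

Lemma step_zero t x K : mstep (cpair (eval_st t (pcode PZero) x) K) = cpair (ret_st 0) K.
Proof. by step_simp. Qed.
Lemma step_succ t x K : mstep (cpair (eval_st t (pcode PSucc) x) K) = cpair (ret_st x.+1) K.
Proof. by step_simp. Qed.
Lemma step_id t x K : mstep (cpair (eval_st t (pcode PId) x) K) = cpair (ret_st x) K.
Proof. by step_simp. Qed.
Lemma step_fst t x K :
  mstep (cpair (eval_st t (pcode PFst) x) K) = cpair (ret_st (unpair x).1) K.
Proof. by step_simp. Qed.
Lemma step_snd t x K :
  mstep (cpair (eval_st t (pcode PSnd) x) K) = cpair (ret_st (unpair x).2) K.
Proof. by step_simp. Qed.
Lemma step_query t x K : mstep (cpair (eval_st t (pcode POracle) x) K) =
  cpair (den o OnQuery [:: x; t; cpair (eval_st t (pcode POracle) x) K]) K.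
Proof. by step_simp. Qed.
Lemma step_pair t f g x K : mstep (cpair (eval_st t (pcode (PPair f g)) x) K) =
  cpair (eval_st t (pcode f) x) (push (pair1_fr t (pcode g) x) K).
Proof. by step_simp. Qed.
Lemma step_pair1 t g x v K : mstep (cpair (ret_st v) (push (pair1_fr t g x) K)) =
  cpair (eval_st t g x) (push (pair2_fr v) K).
Proof. by step_simp. Qed.
Lemma step_pair2 a v K :
  mstep (cpair (ret_st v) (push (pair2_fr a) K)) = cpair (ret_st (cpair a v)) K.
Proof. by step_simp. Qed.
Lemma step_comp t f g x K : mstep (cpair (eval_st t (pcode (PComp f g)) x) K) =
  cpair (eval_st t (pcode g) x) (push (comp_fr t (pcode f)) K).
Proof. by step_simp. Qed.
Lemma step_comp1 t f v K :
  mstep (cpair (ret_st v) (push (comp_fr t f) K)) = cpair (eval_st t f v) K.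
Proof. by step_simp. Qed.
Lemma step_rec t f g x N K : mstep (cpair (eval_st t (pcode (PRec f g)) (cpair x N)) K) =
  cpair (eval_st t (pcode f) x) (push (rec_fr t (pcode g) x 0 N) K).
Proof. by step_simp. Qed.
Lemma step_rec1 t g x n N K v : mstep (cpair (ret_st v) (push (rec_fr t g x n N) K)) =
  if n == N then cpair (ret_st v) K
  else cpair (eval_st t g (cpair x (cpair n v))) (push (rec_fr t g x n.+1 N) K).
Proof. by step_simp; case: eqP. Qed.
Lemma step_mu t f x K : mstep (cpair (eval_st t (pcode (PMu f)) x) K) =
  cpair (eval_st t (pcode f) (cpair x 0)) (push (mu_fr t (pcode f) x 0) K).
Proof. by step_simp. Qed.
Lemma step_mu1 t f x n v K : mstep (cpair (ret_st v) (push (mu_fr t f x n) K)) =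
  if v is 0 then cpair (ret_st n) K
  else cpair (eval_st t f (cpair x n.+1)) (push (mu_fr t f x n.+1) K).
Proof. by step_simp; case: v. Qed.
Lemma step_halt v : mstep (cpair (ret_st v) 0) = cpair (ret_st v) 0.
Proof. by step_simp. Qed.

End Step.

(** * The machine simulates the big-step semantics *)

Section EvNestedInd.
Variables (w : nat -> nat) (P : prog -> nat -> nat -> Prop).
Hypotheses
  (HZero : forall x, P PZero x 0)
  (HSucc : forall x, P PSucc x x.+1)
  (HId : forall x, P PId x x)
  (HOracle : forall x, P POracle x (w x))
  (HFst : forall x, P PFst x (unpair x).1)
  (HSnd : forall x, P PSnd x (unpair x).2)
  (HPair : forall f g x a b, P f x a -> P g x b -> P (PPair f g) x (cpair a b))
  (HComp : forall f g x a b, P g x a -> P f a b -> P (PComp f g) x b)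
  (HRec0 : forall f g x v, P f x v -> P (PRec f g) (cpair x 0) v)
  (HRecS : forall f g x n r v, P (PRec f g) (cpair x n) r ->
     P g (cpair x (cpair n r)) v -> P (PRec f g) (cpair x n.+1) v)
  (HMu : forall f x n, P f (cpair x n) 0 ->
     (forall m, m < n -> exists u, P f (cpair x m) u.+1) -> P (PMu f) x n).

(* The generated [ev_ind] gives no induction hypothesis for the premises of
   [evMu] hidden under [forall m, m < n -> exists w, _]. *)
Fixpoint ev_ind_nested p x v (H : ev w p x v) {struct H} : P p x v :=
  match H in ev _ p x v return P p x v with
  | evZero x => HZero x
  | evSucc x => HSucc x
  | evId x => HId x
  | evOracle x => HOracle x
  | evFst x => HFst x
  | evSnd x => HSnd x
  | evPair _ _ _ _ _ Hf Hg => HPair (ev_ind_nested Hf) (ev_ind_nested Hg)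
  | evComp _ _ _ _ _ Hg Hf => HComp (ev_ind_nested Hg) (ev_ind_nested Hf)
  | evRec0 _ _ _ _ Hf => HRec0 _ (ev_ind_nested Hf)
  | evRecS _ _ _ _ _ _ Hr Hg => HRecS (ev_ind_nested Hr) (ev_ind_nested Hg)
  | evMu _ _ _ H0 Hlt => HMu (ev_ind_nested H0)
      (fun m hm => let: ex_intro u Hu := Hlt m hm in ex_intro _ u (ev_ind_nested Hu))
  end.

End EvNestedInd.

Section MachineComplete.
Variables (o : nat -> nat) (OnQuery : expr).
Local Notation mstep := (mstep o OnQuery).

Definition reach (c d : nat) : Prop := exists n, iter n mstep c = d.

Lemma reach_refl c : reach c c.
Proof. by exists 0. Qed.

Lemma reach_trans c d e : reach c d -> reach d e -> reach c e.
Proof. by move=> [n <-] [m <-]; exists (m + n); rewrite iterD. Qed.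

Lemma reach_step c d : reach (mstep c) d -> reach c d.
Proof. by move=> [n <-]; exists n.+1; rewrite iterSr. Qed.

Lemma reach_step1 c d : mstep c = d -> reach c d.
Proof. by move=> E; apply: reach_step; rewrite E; exact: reach_refl. Qed.

Variables (t : nat) (w : nat -> nat).
Hypothesis reach_query :
  forall x K, reach (cpair (eval_st t (pcode POracle) x) K) (cpair (ret_st (w x)) K).

Definition runs_to (p : prog) (x v : nat) : Prop :=
  forall K, reach (cpair (eval_st t (pcode p) x) K) (cpair (ret_st v) K).

(* The invariant for [PRec]: the loop of a recursion on [<x, N>] passes
   through the frame counting [n], for every [n <= N]. *)
Definition runs_rec_prefix (p : prog) (y v : nat) : Prop :=
  forall f g x n, p = PRec f g -> y = cpair x n -> forall N K, n <= N ->
  reach (cpair (eval_st t (pcode f) x) (push (rec_fr t (pcode g) x 0 N) K))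
        (cpair (ret_st v) (push (rec_fr t (pcode g) x n N) K)).

Lemma runs_rec f g x n v : runs_rec_prefix (PRec f g) (cpair x n) v ->
  runs_to (PRec f g) (cpair x n) v.
Proof.
move=> H K; apply: reach_step; rewrite step_rec.
apply: reach_trans (H _ _ _ _ erefl erefl n K (leqnn n)) _.
by apply: reach_step1; rewrite step_rec1 eqxx.
Qed.

Lemma runs_mu f x n : runs_to f (cpair x n) 0 ->
  (forall m, m < n -> exists u, runs_to f (cpair x m) u.+1) -> runs_to (PMu f) x n.
Proof.
move=> H0 Hlt K; apply: reach_step; rewrite step_mu.
suff loop k : k <= n -> reach (cpair (eval_st t (pcode f) (cpair x (n - k)))
                                 (push (mu_fr t (pcode f) x (n - k)) K)) (cpair (ret_st n) K).
  by have := loop n (leqnn n); rewrite subnn.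
elim: k => [|k IH] hk.
  rewrite subn0; apply: reach_trans (H0 _) _.
  by apply: reach_step1; rewrite step_mu1.
have [u Hu] := Hlt (n - k.+1) ltac:(lia).
apply: reach_trans (Hu _) _; apply: reach_step; rewrite step_mu1.
have -> : (n - k.+1).+1 = n - k by lia.
exact: IH (ltnW hk).
Qed.

Lemma machine_complete_spec p x v : ev w p x v -> runs_to p x v /\ runs_rec_prefix p x v.
Proof.
elim/ev_ind_nested: p x v / => //.
- by move=> x; split=> // K; apply: reach_step1; rewrite step_zero.
- by move=> x; split=> // K; apply: reach_step1; rewrite step_succ.
- by move=> x; split=> // K; apply: reach_step1; rewrite step_id.
- by move=> x; split=> // K; exact: reach_query.
- by move=> x; split=> // K; apply: reach_step1; rewrite step_fst.
- by move=> x; split=> // K; apply: reach_step1; rewrite step_snd.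
- move=> f g x a b [Hf _] [Hg _]; split=> // K.
  apply: reach_step; rewrite step_pair; apply: reach_trans (Hf _) _.
  apply: reach_step; rewrite step_pair1; apply: reach_trans (Hg _) _.
  by apply: reach_step1; rewrite step_pair2.
- move=> f g x a b [Hg _] [Hf _]; split=> // K.
  apply: reach_step; rewrite step_comp; apply: reach_trans (Hg _) _.
  by apply: reach_step; rewrite step_comp1; exact: Hf.
- move=> f g x v [Hf _].
  suff Hp : runs_rec_prefix (PRec f g) (cpair x 0) v by split=> //; exact: runs_rec.
  by move=> _ _ _ _ [<- <-] /cpair_inj[<- <-] N K _; exact: Hf.
- move=> f g x n r v [_ Hr] [Hg _].
  suff Hp : runs_rec_prefix (PRec f g) (cpair x n.+1) v by split=> //; exact: runs_rec.
  move=> _ _ _ _ [<- <-] /cpair_inj[<- <-] N K hN.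
  apply: reach_trans (Hr f g x n erefl erefl N K (ltnW hN)) _.
  apply: reach_step; rewrite step_rec1; have /negPf -> : n != N by lia.
  exact: Hg.
- move=> f x n [H0 _] Hlt; split=> //; apply: runs_mu => // m /Hlt[u [Hu _]].
  by exists u.
Qed.

Lemma machine_complete p x v : ev w p x v ->
  forall K, reach (cpair (eval_st t (pcode p) x) K) (cpair (ret_st v) K).
Proof. by move=> /machine_complete_spec[]. Qed.

End MachineComplete.

(** * Running the machine inside a program *)

Definition mu_prog (body : expr) : prog := PMu (PComp (compile body) (PPair PSnd PFst)).

Lemma ev_mu_prog o body env n : calls_ok o body ->
  (forall m, m < n -> den o body (m :: env) != 0) -> den o body (n :: env) = 0 ->
  ev o (mu_prog body) (env_code env) n.
Proof.
move=> Hok Hlt H0.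
have Hc m : ev o (PComp (compile body) (PPair PSnd PFst)) (cpair (env_code env) m)
                 (den o body (m :: env)).
  exact: evComp (evPair (ev_snd_cpair _ _ _) (ev_fst_cpair _ _ _)) (compile_correct Hok (m :: _)).
apply: evMu => [|m /Hlt]; first by rewrite -H0.
by rewrite -lt0n => /prednK Hm; exists (den o body (m :: env)).-1; rewrite Hm.
Qed.

Section Run.
Variables (o : nat -> nat) (OnQuery Init : expr).
Hypotheses (OnQuery_scoped : scoped 3 OnQuery)
  (OnQuery_no_calls : no_calls OnQuery) (Init_no_calls : no_calls Init).
Local Notation mstep := (mstep o OnQuery).
Local Notation reach := (reach o OnQuery).

Definition halted (c : nat) : bool := ((unpair (unpair c).1).1 == 1) && ((unpair c).2 == 0).

Lemma halted_ret v : halted (cpair (ret_st v) 0).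
Proof. by rewrite /halted !unpair_cpair. Qed.

Lemma halted_retP c : halted c -> c = cpair (ret_st (unpair (unpair c).1).2) 0.
Proof. by case/andP=> /eqP H1 /eqP H2; rewrite /ret_st -H1 -H2 !cpair_unpair. Qed.

Lemma iter_halted c k : halted c -> iter k mstep c = c.
Proof. by move=> /halted_retP E; elim: k => //= k ->; rewrite E step_halt. Qed.

Lemma first_halt init v : reach init (cpair (ret_st v) 0) ->
  exists t, iter t mstep init = cpair (ret_st v) 0 /\
            forall m, m < t -> ~~ halted (iter m mstep init).
Proof.
move=> [n Hn]; have exP : exists t, halted (iter t mstep init) by exists n; rewrite Hn halted_ret.
case: (ex_minnP exP) => t Ht Hmin; exists t; split; last first.
  by move=> m hm; apply/negP => /Hmin; lia.
have tn : t <= n by apply: Hmin; rewrite Hn halted_ret.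
by rewrite -Hn -(subnK tn) iterD (iter_halted _ Ht).
Qed.

Definition Iterate := Rec (Var 0) Init (STEP OnQuery).
Definition Halted := Let Iterate
  (IfEq (Fst (Fst (Var 0))) (Cst 1) (IfZ (Snd (Var 0)) (Cst 0) (Cst 1)) (Cst 1)).
Definition run_prog : prog :=
  PComp (compile (Let Iterate (Snd (Fst (Var 0))))) (PPair (mu_prog Halted) PId).

Variables (env : seq nat) (init : nat).
Hypothesis den_Init : forall t, den o Init (t :: env) = init.

Lemma den_Iterate t : den o Iterate (t :: env) = iter t mstep init.
Proof.
rewrite den_Rec den_Init den_Var -prim_rec_iter; apply: eq_prim_rec => k r.
by apply: (@den_scoped _ _ 1) => [|[]] //; rewrite /= OnQuery_scoped.
Qed.

Lemma den_Halted t : den o Halted (t :: env) = ~~ halted (iter t mstep init).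
Proof.
rewrite den_Let; den_simp; rewrite den_Iterate /halted.
by case: eqP => //= _; case: (unpair _).2.
Qed.

Lemma ev_run_prog v : reach init (cpair (ret_st v) 0) -> ev o run_prog (env_code env) v.
Proof.
case/first_halt=> t [Ht Hmin].
apply: evComp (evPair (ev_mu_prog (n := t) _ _ _) (evId _ _)) _.
- by apply: no_calls_ok; rewrite /= Init_no_calls OnQuery_no_calls.
- by move=> m /Hmin; rewrite den_Halted; case: halted.
- by rewrite den_Halted Ht halted_ret.
have Hok : calls_ok o (Let Iterate (Snd (Fst (Var 0)))).
  by apply: no_calls_ok; rewrite /= Init_no_calls OnQuery_no_calls.
have := compile_correct Hok (t :: env).
by rewrite den_Let den_Iterate Ht den_Snd den_Fst den_Var /= !unpair_cpair.
Qed.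

End Run.

(** * Decoding program indices *)

Lemma unpickle_sumE n : @unpickle (nat + nat)%type n =
  if CodeSeq.decode n is [:: a; b]
  then sum_of_opair (ohead (CodeSeq.decode a), ohead (CodeSeq.decode b)) else None.
Proof.
rewrite /unpickle /= /pcomp /unpickle /= /unpickle /= /pcomp /unpickle_tagged /=.
case: (CodeSeq.decode n) => [|a [|b [|c s]]] //=; rewrite /unpickle /= /pcomp /=.
by case: (CodeSeq.decode a) => [|? ?]; case: (CodeSeq.decode b) => [|? ?].
Qed.

Lemma ohead_decode x : ohead (CodeSeq.decode x) = if x is 0 then None else Some (cs_head x).
Proof. by case: x => // x; have [-> _] := decode_cons (isT : 0 < x.+1). Qed.

Definition token_code (x : option (nat + nat)) : nat :=
  match x with
  | None => 0
  | Some (inl a) => (cpair 0 a).+1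
  | Some (inr b) => (cpair 1 b).+1
  end.

Definition Token (e : expr) :=
  IfZ e (Cst 0) (IfZ (CsTail e) (Cst 0) (IfZ (CsTail (CsTail e))
    (IfZ (CsHead (CsTail e)) (IfZ (CsHead e) (Cst 0) (Succ (Pair (Cst 0) (CsHead (CsHead e)))))
                             (Succ (Pair (Cst 1) (CsHead (CsHead (CsTail e))))))
    (Cst 0))).

Lemma den_Token o e env :
  den o (Token e) env = token_code (@unpickle (nat + nat)%type (den o e env)).
Proof.
rewrite /Token unpickle_sumE; den_simp.
case: (den o e env) => [|n] //; have [-> _] := decode_cons (isT : 0 < n.+1).
case: (cs_tail n.+1) => [|m] //; have [-> _] := decode_cons (isT : 0 < m.+1).
case: (cs_tail m.+1) => [|k]; last by have [-> _] := decode_cons (isT : 0 < k.+1).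
by rewrite !ohead_decode /=; case: (cs_head m.+1) => [|b]; case: (cs_head n.+1).
Qed.

(* [0] flags a tree that is not a program. *)
Definition tree_pcode (t : GenTree.tree nat) : nat :=
  if prog_dec t is Some p then (pcode p).+1 else 0.

Definition node_pcode (n : nat) (xs : seq nat) : nat :=
  match xs with
  | [::] => if n <= 5 then (cpair n 0).+1 else 0
  | [:: a] => if (n == 9) && (a != 0) then (cpair 9 a.-1).+1 else 0
  | [:: a; b] => if [&& 6 <= n <= 8, a != 0 & b != 0] then (cpair n (cpair a.-1 b.-1)).+1 else 0
  | _ => 0
  end.

Lemma tree_pcode_node n l : tree_pcode (GenTree.Node n l) = node_pcode n (map tree_pcode l).
Proof.
rewrite /tree_pcode; case: l => [|t1 [|t2 [|t3 l]]] /=.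
- by do 6 (case: n => [|n]; first by []); case: n => [|[|[|[|n]]]].
- case: (prog_dec t1) => [p|] /=;
  by do 9 (case: n => [|n]; first by []); case: n => [|n].
- case: (prog_dec t1) => [p|]; case: (prog_dec t2) => [q|] /=;
  by do 6 (case: n => [|n]; first by []); do 3 (case: n => [|n]; first by []); case: n.
- by do 10 (case: n => [|n]; first by []).
Qed.

Definition NodePcode (N L : expr) : expr :=
  let leaf := IfZ L (Succ (Pair N (Cst 0))) (Cst 0) in
  let bin := IfZ L (Cst 0) (IfZ (Tl L) (Cst 0) (IfZ (Tl (Tl L))
               (IfZ (Hd L) (Cst 0) (IfZ (Hd (Tl L)) (Cst 0)
                  (Succ (Pair N (Pair (Pred (Hd L)) (Pred (Hd (Tl L))))))))
               (Cst 0))) in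
  let un := IfZ L (Cst 0)
    (IfZ (Tl L) (IfZ (Hd L) (Cst 0) (Succ (Pair (Cst 9) (Pred (Hd L))))) (Cst 0)) in
  Case N [:: leaf; leaf; leaf; leaf; leaf; leaf; bin; bin; bin; un] (Cst 0).

Lemma den_NodePcode o N L env xs : den o L env = list_code xs ->
  den o (NodePcode N L) env = node_pcode (den o N env) xs.
Proof.
move=> HL; rewrite /NodePcode den_Case; move Hm: (den o N env) => m.
case: m Hm => [|[|[|[|[|[|[|[|[|[|n]]]]]]]]]] Hm; cbv beta iota delta [nth map];
  try (den_simp; rewrite ?Hm HL; case: xs HL => [|a [|b [|c s]]] HL /=; den_simp; clear HL;
       (try case: a => [|a]); (try case: b => [|b]); by []).
by case: xs {HL} => [|a [|b [|c s]]]; case: n {Hm}.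
Qed.

Definition split_step (r : nat) : nat :=
  let: (c, l) := unpair r in if c is 0 then r else cpair (cs_tail c) (cpair (cs_head c) l).+1.

Definition SplitStep := IfZ (Fst (Var 0)) (Var 0)
  (Pair (CsTail (Fst (Var 0))) (Cons (CsHead (Fst (Var 0))) (Snd (Var 0)))).

Lemma den_SplitStep o r env : den o SplitStep (r :: env) = split_step r.
Proof. by rewrite -[r]cpair_unpair /split_step; case: (unpair r) => [[|c] l]; den_simp. Qed.

Lemma iter_split_step k c L : c <= k ->
  iter k split_step (cpair c (list_code L)) = cpair 0 (list_code (catrev (CodeSeq.decode c) L)).
Proof.
have split0 l : split_step (cpair 0 l) = cpair 0 l by rewrite /split_step unpair_cpair.
elim: k c L => [|k IH] c L hc; first by have -> : c = 0 by lia.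
rewrite iterSr; case: c hc => [|c] hc; first by rewrite split0 (IH 0).
have [Hd Hlt] := decode_cons (ltn0Sn c).
by rewrite /split_step unpair_cpair (IH _ (_ :: L)) ?Hd //; lia.
Qed.

Definition DecodeRev e := Snd (Rec e (Pair e (Cst 0)) SplitStep).

Lemma den_DecodeRev o e env :
  den o (DecodeRev e) env = list_code (rev (CodeSeq.decode (den o e env))).
Proof.
rewrite den_Snd den_Rec den_Pair den_Cst.
rewrite (@eq_prim_rec _ _ (fun _ r => split_step r)); last by move=> k r; rewrite den_SplitStep.
by rewrite prim_rec_iter (iter_split_step [::]) // unpair_cpair.
Qed.

(* [TreeStep] replays the stack machine of [GenTree.decode] on a list of
   tokens, keeping [tree_pcode] of each decoded tree instead of the tree. *)
Definition forest_code (l : seq (GenTree.tree nat)) : nat := list_code (map tree_pcode l).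
Definition stack_code (st : seq (GenTree.tree nat) * seq (seq (GenTree.tree nat))) : nat :=
  cpair (forest_code st.1) (list_code (map forest_code st.2)).

Definition token_step (x : nat) st :=
  if @unpickle (nat + nat)%type x is Some c then GenTree.decode_step c st else st.

Definition TreeStep :=
  let L1 := Fst (Var 1) in let S1 := Fst (Snd (Var 1)) in let S2 := Snd (Snd (Var 1)) in
  let T := Pred (Var 0) in
  IfZ (Fst (Var 0)) (Var 0) (Let (Token (Hd (Fst (Var 0))))
   (IfZ (Var 0) (Pair (Tl L1) (Snd (Var 1)))
     (IfZ (Fst T)
        (IfZ (Snd T) (Pair (Tl L1) (Pair (Cst 0) (Cons S1 S2)))
                     (Pair (Tl L1) (Pair (Cons (NodePcode (Pred (Snd T)) S1) (Hd S2)) (Tl S2))))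
        (Pair (Tl L1) (Pair (Cons (Cst 0) S1) S2))))).

Lemma den_TreeStep_nil o S env : den o TreeStep (cpair 0 S :: env) = cpair 0 S.
Proof. by rewrite /TreeStep; den_simp. Qed.

Lemma den_TreeStep_cons o x ns st env :
  den o TreeStep (cpair (list_code (x :: ns)) (stack_code st) :: env) =
  cpair (list_code ns) (stack_code (token_step x st)).
Proof.
rewrite /TreeStep /token_step; case E: (@unpickle (nat + nat)%type x) => [[[|n]|y]|];
repeat first
  [ rewrite den_Token | rewrite E
  | rewrite (@den_NodePcode o _ _ _ (map tree_pcode st.1)); last by rewrite /stack_code; den_simp
  | den_step ].
all: case: st => fs1 fs2; rewrite /stack_code /forest_code //=.
by rewrite tree_pcode_node; case: fs2 => [|l fs2] /=; rewrite ?unpair0 ?unpair_cpair.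
Qed.

Lemma iter_TreeStep o ns st k : size ns <= k ->
  iter k (fun r => den o TreeStep [:: r]) (cpair (list_code ns) (stack_code st)) =
  cpair 0 (stack_code (foldl (fun st x => token_step x st) st ns)).
Proof.
elim: ns st k => [|x ns IH] st k hk.
  by elim: k {hk} => [|k IHk] //; rewrite iterS IHk den_TreeStep_nil.
case: k hk => [|k] // hk; rewrite iterSr den_TreeStep_cons; exact: IH.
Qed.

Lemma foldr_token_step st l : foldr token_step st l =
  foldr (@GenTree.decode_step nat) st (pmap (@unpickle (nat + nat)%type) l).
Proof. by elim: l => //= x l ->; rewrite /token_step; case: (unpickle x). Qed.

Definition PcodeOfIndex e :=
  let S1 := Fst (Snd (Var 0)) in
  Let (DecodeRev e) (Let (Rec (Var 0) (Pair (Var 0) (Pair (Cst 0) (Cst 0))) TreeStep)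
    (IfZ S1 (Cst (pcode loop_prog)) (IfZ (Hd S1) (Cst (pcode loop_prog)) (Pred (Hd S1))))).

Lemma den_PcodeOfIndex o e env : den o (PcodeOfIndex e) env = pcode (prog_of (den o e env)).
Proof.
rewrite /PcodeOfIndex den_Let den_DecodeRev den_Let den_Rec !den_Pair !den_Var !den_Cst.
rewrite (@eq_prim_rec _ _ (fun _ r => den o TreeStep [:: r])); last first.
  by move=> k r; apply: (@den_scoped _ _ 1) => // -[].
rewrite prim_rec_iter (_ : cpair 0 0 = stack_code ([::], [::])) //.
rewrite iter_TreeStep ?size_list_code // foldl_rev foldr_token_step /prog_of.
have -> : @unpickle prog (den o e env) = obind prog_dec
  (GenTree.decode (pmap (@unpickle (nat + nat)%type) (CodeSeq.decode (den o e env)))) by [].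
rewrite /GenTree.decode; case: (foldr _ _ _) => fs1 fs2; den_simp.
by case: fs1 => [|t fs1] //=; rewrite unpair_cpair /= /tree_pcode; case: (prog_dec t).
Qed.

(** * An embedding makes [X] computable from [Y] *)

Lemma ev_eq_test o R (F : nat -> nat) c :
  (forall n, ev o R (env_code [:: n]) (F n)) ->
  forall n, ev o (PComp (compile (IfEq (Var 0) (Cst c) (Cst 1) (Cst 0))) (PComp env1_prog
                  (PComp R env1_prog))) n (F n == c).
Proof.
move=> HR n; apply: evComp (evComp (evComp (ev_env1_prog _ n) (HR n)) (ev_env1_prog _ _)) _.
have := compile_correct (@no_calls_ok o (IfEq (Var 0) (Cst c) (Cst 1) (Cst 0)) isT) [:: F n].
by rewrite den_IfEq den_Var den_Cst /=; case: eqP.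
Qed.

Section EmbeddingReduction.
Variables (X Y : nat -> bool) (f : nat -> nat -> nat).
Hypothesis f_app : forall a b c, K1app X a b c -> K2app (f a) (f b) (f c).
Variables (e0 eS eQ : nat).
Hypotheses (e0_spec : forall n, Phi (chi Y) e0 n (f 0 n))
  (eS_spec : forall n, Phi (chi Y) eS n (f (pickle PSucc) n))
  (eQ_spec : forall n, Phi (chi Y) eQ n (f (pickle POracle) n)).

Local Notation c0 := (pcode (prog_of e0)).
Local Notation cS := (pcode (prog_of eS)).
Local Notation cQ := (pcode (prog_of eQ)).
Local Notation cs := (pcode (prog_of (f (pickle PSucc) 0))).
Local Notation cq := (pcode (prog_of (f (pickle POracle) 0))).

(* As [pickle PSucc . j = j + 1] in [K_1^X], [f (j + 1) = f (pickle PSucc) . f j]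
   in [K_2^Y]: under tag [<1, j>] the machine computes [f j] by running the
   index [f (pickle PSucc) 0] with oracle [f (pickle PSucc) (+) f (j - 1)],
   recursing on odd queries. Tag [<2, n>] likewise computes [f (chi X n)]
   from [f (pickle POracle)], and tag [0] queries [Y]. *)
Definition fval_st (j m : nat) : nat :=
  if j is 0 then eval_st 0 c0 m else eval_st (cpair 1 j) cs m.

Definition FvalSt (J M : expr) : expr :=
  IfZ J (EvalSt (Cst 0) (Cst c0) M) (EvalSt (Pair (Cst 1) J) (Cst cs) M).

Definition OnQueryK2 : expr :=
  IfZ (Fst (Var 1)) (RetSt (Query (Var 0)))
    (IfZ (Odd (Var 0))
       (EvalSt (Cst 0) (IfEq (Fst (Var 1)) (Cst 1) (Cst cS) (Cst cQ)) (Half (Var 0)))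
       (IfEq (Fst (Var 1)) (Cst 1) (FvalSt (Pred (Snd (Var 1))) (Half (Var 0)))
                                   (FvalSt (Snd (Var 1)) (Half (Var 0))))).

Section OnQueryK2.
Variables (o : nat -> nat) (q c : nat).

Lemma den_OnQueryK2_0 : den o OnQueryK2 [:: q; 0; c] = ret_st (o q).
Proof. by rewrite /OnQueryK2; den_simp. Qed.

Lemma den_OnQueryK2_even k j : k != 0 -> ~~ odd q ->
  den o OnQueryK2 [:: q; cpair k j; c] = eval_st 0 (if k == 1 then cS else cQ) q./2.
Proof. by move=> Hk /negPf Hq; rewrite /OnQueryK2; den_simp; case: k Hk => // k; rewrite Hq. Qed.

Lemma den_OnQueryK2_odd1 j : odd q -> den o OnQueryK2 [:: q; cpair 1 j; c] = fval_st j.-1 q./2.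
Proof. by move=> Hq; rewrite /OnQueryK2; den_simp; rewrite Hq /=; case: j.-1. Qed.

Lemma den_OnQueryK2_odd2 j : odd q -> den o OnQueryK2 [:: q; cpair 2 j; c] = fval_st j q./2.
Proof. by move=> Hq; rewrite /OnQueryK2; den_simp; rewrite Hq /=; case: j. Qed.

End OnQueryK2.

Local Notation reach := (reach (chi Y) OnQueryK2).

Lemma reach_Y p x v : ev (chi Y) p x v ->
  forall K, reach (cpair (eval_st 0 (pcode p) x) K) (cpair (ret_st v) K).
Proof.
apply: machine_complete => q K.
by apply: reach_step1; rewrite step_query den_OnQueryK2_0.
Qed.

Lemma reach_fval j m K : reach (cpair (fval_st j m) K) (cpair (ret_st (f j m)) K).
Proof.
elim: j m K => [|j IH] m K; first exact: (reach_Y (e0_spec m) K).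
have Happ : K2app (f (pickle PSucc)) (f j) (f j.+1).
  by apply: f_app; rewrite /K1app /Phi prog_of_pickle; exact: evSucc.
apply: (machine_complete _ (Happ m) K) => q K'.
apply: reach_step; rewrite step_query /join; case Hq: (odd q).
- by rewrite den_OnQueryK2_odd1.
- by rewrite den_OnQueryK2_even ?Hq //; exact: (reach_Y (eS_spec _) K').
Qed.

Lemma reach_chi n k K :
  reach (cpair (eval_st (cpair 2 n) cq k) K) (cpair (ret_st (f (chi X n) k)) K).
Proof.
have Happ : K2app (f (pickle POracle)) (f n) (f (chi X n)).
  by apply: f_app; rewrite /K1app /Phi prog_of_pickle; exact: evOracle.
apply: (machine_complete _ (Happ k) K) => q K'.
apply: reach_step; rewrite step_query /join; case Hq: (odd q).
- by rewrite den_OnQueryK2_odd2 //; exact: reach_fval.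
- by rewrite den_OnQueryK2_even ?Hq //; exact: (reach_Y (eQ_spec _) K').
Qed.

Lemma separating_embedding_turing_le k0 : f 0 k0 <> f 1 k0 -> turing_le X Y.
Proof.
move=> f01; pose Init := Pair (EvalSt (Pair (Cst 2) (Var 1)) (Cst cq) (Cst k0)) (Cst 0).
have Hrun n : ev (chi Y) (run_prog OnQueryK2 Init) (env_code [:: n]) (f (chi X n) k0).
  apply: (@ev_run_prog _ _ _ _ _ _ _ (cpair (eval_st (cpair 2 n) cq k0) 0)) => //.
  exact: reach_chi.
exists (pickle (PComp (compile (IfEq (Var 0) (Cst (f 1 k0)) (Cst 1) (Cst 0)))
                 (PComp env1_prog (PComp (run_prog OnQueryK2 Init) env1_prog)))) => n.
rewrite /Phi prog_of_pickle; have := ev_eq_test (f 1 k0) Hrun n.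
by rewrite /chi; case: (X n) => //=; case: eqP.
Qed.

End EmbeddingReduction.

Lemma embedding_turing_le X Y f : K1_K2_embedding X Y f -> turing_le X Y.
Proof.
case=> f_comp f_inj f_app.
have [k0 f01] : exists k0, f 0 k0 <> f 1 k0.
  by apply: not_all_ex_not => /f_inj.
have [[e0 H0] [eS HS]] := (f_comp 0, f_comp (pickle PSucc)).
have [eQ HQ] := f_comp (pickle POracle).
exact: (@separating_embedding_turing_le X Y f f_app _ _ _ H0 HS HQ _ f01).
Qed.

(** * A reduction yields an embedding *)

Section ReductionEmbedding.
Variable X : nat -> bool.

(* [a] is sent to [(u, a, chi X)], where [u] is the index of [univ_prog]. *)
Definition emb_fun (u a n : nat) : nat := if n is m.+2 then chi X m else if n is 0 then u else a.

(* With oracle [g (+) h], [univ_prog] reads [a = g 1] and [b = h 1], runs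
   [Phi^X_a(b)] answering the query [x] by [g (x + 2)], and outputs
   [g 0], the result [c], or [g n] according to [n]. *)
Definition OnQueryX := RetSt (Query (Dbl (Succ (Succ (Var 0))))).
Definition InitX := Pair (EvalSt (Cst 0) (PcodeOfIndex (Query (Cst 2))) (Query (Cst 3))) (Cst 0).
Definition OutX := IfZ (Var 1) (Query (Cst 0)) (IfZ (Pred (Var 1)) (Var 0) (Query (Dbl (Var 1)))).
Definition univ_prog : prog :=
  PComp (compile OutX) (PPair (PComp (run_prog OnQueryX InitX) env1_prog) env1_prog).

Lemma join_double g h n : join g h n.*2 = g n.
Proof. by rewrite /join odd_double doubleK. Qed.

Lemma emb_fun_computable Y u a : turing_le X Y -> K2elem Y (emb_fun u a).
Proof.
case=> e He; pose Out := IfZ (Var 0) (Cst u)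
  (IfZ (Pred (Var 0)) (Cst a) (Call (prog_of e) (chi X) (Pred (Pred (Var 0))))).
exists (pickle (PComp (compile Out) env1_prog)) => n; rewrite /Phi prog_of_pickle.
have Hok : calls_ok (chi Y) Out by split=> //; exact: He.
apply: evComp (ev_env1_prog _ _) _; have := compile_correct Hok [:: n].
by rewrite /Out; den_simp; case: n => [|[|n]].
Qed.

Lemma emb_fun_app u a b c : prog_of u = univ_prog -> K1app X a b c ->
  K2app (emb_fun u a) (emb_fun u b) (emb_fun u c).
Proof.
move=> Hu Hab n; rewrite /Phi /= Hu; set w := join (emb_fun u a) (emb_fun u b).
have Hrun : ev w (run_prog OnQueryX InitX) (env_code [:: n]) c.
  apply: (@ev_run_prog _ _ _ _ _ _ _ (cpair (eval_st 0 (pcode (prog_of a)) b) 0)) => //.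
    by move=> t; rewrite /InitX den_Pair den_EvalSt den_PcodeOfIndex; den_simp.
  apply: (machine_complete _ Hab) => q K; apply: reach_step1.
  by rewrite step_query /OnQueryX; den_simp; rewrite /w join_double.
apply: evComp (evPair (evComp (ev_env1_prog _ _) Hrun) (ev_env1_prog _ _)) _.
have := compile_correct (@no_calls_ok w OutX isT) [:: c; n].
by rewrite /OutX; den_simp; case: n {Hrun} => [|[|n]] //=; rewrite /w join_double.
Qed.

End ReductionEmbedding.

Lemma turing_le_embedding X Y : turing_le X Y -> exists f, K1_K2_embedding X Y f.
Proof.
move=> XY; exists (emb_fun X (pickle univ_prog)); split.
- by move=> a; exact: emb_fun_computable.
- by move=> a b /(_ 1).
- by move=> a b c; apply: emb_fun_app; exact: prog_of_pickle.
Qed.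

Theorem theorem6p7 (X Y : nat -> bool) :
  (exists f : nat -> nat -> nat, K1_K2_embedding X Y f) <-> turing_le X Y.
Proof. by split=> [[f /embedding_turing_le]|/turing_le_embedding]. Qed.
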